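(* Let $(W,\odot,\mathbb{1})$ be a monoid and $(M,+,\mathbb{0},\otimes)$ an $\omega$-continuous (left) $W$-module. Then for every $W$-wgcl program $C$, every state $\sigma\in\Sigma$ and every weighting $f\in\mathrm{Wt}=M^\Sigma$, $$\mathrm{wp}[\![C]\!](f)(\sigma)=\sum_{\pi\in\mathrm{TPaths}(\langle C,\sigma\rangle)}\mathrm{wgt}(\pi)\otimes f(\mathrm{last}(\pi)),$$ where $\mathrm{TPaths}(\langle C,\sigma\rangle)$ is the (countable) set of terminating computation paths starting in the configuration $\langle C,\sigma\rangle$.
   Context: A (left) module over a monoid $(W,\odot,\mathbb{1})$ is a commutative monoid $(M,+,\mathbb{0})$ with an action $\otimes\colon W\times M\to M$ such that $(v\odot w)\otimes a=v\otimes(w\otimes a)$, $v\otimes(a+b)=(v\otimes a)+(v\otimes b)$, $\mathbb{1}\otimes a=a$, $v\otimes\mathbb{0}=\mathbb{0}$. The natural order is $a\preceq b$ iff $\exists c\colon a+c=b$. $M$ is $\omega$-continuous if $\preceq$ is a partial order, every increasing $\omega$-chain has a supremum, and addition (in each argument) and each map $a\mapsto w\otimes a$ preserve such suprema. A countable sum $\sum_{i}a_i$ in $M$ is the supremum of its finite partial sums. States, programs: $\Sigma$ is the set of states (maps from variables to values); expressions $E$ evaluate to $E(\sigma)$; guards $\varphi$ are predicates on states. $W$-wgcl programs: $C::= x:=E \mid C;C \mid \mathtt{if}(\varphi)\{C\}\mathtt{else}\{C\} \mid \{C\}\oplus\{C\} \mid \mathtt{weight}\ a\ (a\in W) \mid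 \mathtt{while}(\varphi)\{C\}$. Weightings $\mathrm{Wt}=M^\Sigma$ with pointwise operations and order; $([\varphi]\cdot f)(\sigma)=f(\sigma)$ if $\sigma\models\varphi$ else $\mathbb{0}$; $f[x/E](\sigma)=f(\sigma[x\mapsto E(\sigma)])$. Weakest preweighting: $\mathrm{wp}[\![x:=E]\!](f)=f[x/E]$; $\mathrm{wp}[\![C_1;C_2]\!](f)=\mathrm{wp}[\![C_1]\!](\mathrm{wp}[\![C_2]\!](f))$; $\mathrm{wp}[\![\mathtt{if}(\varphi)\{C_1\}\mathtt{else}\{C_2\}]\!](f)=[\varphi]\cdot\mathrm{wp}[\![C_1]\!](f)+[\neg\varphi]\cdot\mathrm{wp}[\![C_2]\!](f)$; $\mathrm{wp}[\![\{C_1\}\oplus\{C_2\}]\!](f)=\mathrm{wp}[\![C_1]\!](f)+\mathrm{wp}[\![C_2]\!](f)$; $\mathrm{wp}[\![\mathtt{weight}\ a]\!](f)=a\otimes f$; $\mathrm{wp}[\![\mathtt{while}(\varphi)\{C'\}]\!](f)$ is the least fixed point of $X\mapsto[\neg\varphi]\cdot f+[\varphi]\cdot\mathrm{wp}[\![C']\!](X)$. Operational semantics: configurations are $\langle C,\sigma\rangle$ for a program $C$ and $\langle\downarrow,\sigma\rangle$ (terminated). Weighted transitions $\xrightarrow{w}$ ($w\in W$): $\langle x:=E,\sigma\rangle\xrightarrow{\mathbb 1}\langle\downarrow,\sigma[x\mapsto E(\sigma)]\rangle$; $\langle\mathtt{weight}\ a,\sigma\rangle\xrightarrow{a}\langle\downarrow,\sigma\rangle$;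 $\langle\{C_1\}\oplus\{C_2\},\sigma\rangle$ has two distinct transitions (a left and a right one, counted separately even if their targets coincide) $\xrightarrow{\mathbb 1}\langle C_1,\sigma\rangle$ and $\xrightarrow{\mathbb 1}\langle C_2,\sigma\rangle$; $\langle\mathtt{if}(\varphi)\{C_1\}\mathtt{else}\{C_2\},\sigma\rangle\xrightarrow{\mathbb 1}\langle C_1,\sigma\rangle$ if $\sigma\models\varphi$ and $\xrightarrow{\mathbb 1}\langle C_2,\sigma\rangle$ otherwise; $\langle\mathtt{while}(\varphi)\{C\},\sigma\rangle\xrightarrow{\mathbb 1}\langle C;\mathtt{while}(\varphi)\{C\},\sigma\rangle$ if $\sigma\models\varphi$ and $\xrightarrow{\mathbb 1}\langle\downarrow,\sigma\rangle$ otherwise; if $\langle C_1,\sigma\rangle\xrightarrow{w}\langle C_1',\sigma'\rangle$ then $\langle C_1;C_2,\sigma\rangle\xrightarrow{w}\langle C_1';C_2,\sigma'\rangle$, and if $\langle C_1,\sigma\rangle\xrightarrow{w}\langle\downarrow,\sigma'\rangle$ then $\langle C_1;C_2,\sigma\rangle\xrightarrow{w}\langle C_2,\sigma'\rangle$. Terminated configurations have no outgoing transitions. A computation path is a finite sequence of consecutive transitions; its weight $\mathrm{wgt}(\pi)=w_1\odot w_2\odot\cdots\odot w_n$ is the product of its transition weights in order (the empty product is $\mathbb 1$). A path is terminating if it ends in a configuration $\langle\downarrow,\tau\rangle$, and then $\mathrm{last}(\pi)=\tau$. *)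

From Stdlib Require Import List ClassicalEpsilon.
Import ListNotations.
Set Implicit Arguments.

Record Monoid := {
  mcar :> Type;
  mop : mcar -> mcar -> mcar;
  munit : mcar;
  mop_assoc : forall a b c, mop (mop a b) c = mop a (mop b c);
  mop_unit_l : forall a, mop munit a = a;
  mop_unit_r : forall a, mop a munit = a
}.

Record LModule (W : Monoid) := {
  car :> Type;
  add : car -> car -> car;
  zero : car;
  act : W -> car -> car;
  add_assoc : forall a b c, add (add a b) c = add a (add b c);
  add_comm : forall a b, add a b = add b a;
  add_zero_l : forall a, add zero a = a;
  act_mul : forall (v w : W) a, act (mop W v w) a = act v (act w a);
  act_add : forall (v : W) a b, act v (add a b) = add (act v a) (act v b);
  act_unit : forall a, act (munit W) a = a;
  act_zero : forall (v : W), act v zero = zero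
}.

Section Order.
Variables (W : Monoid) (M : LModule W).

Definition nle (a b : M) : Prop := exists c, add M a c = b.

Definition is_chain (u : nat -> M) : Prop := forall n, nle (u n) (u (S n)).

Definition is_lub (P : M -> Prop) (s : M) : Prop :=
  (forall m, P m -> nle m s) /\ (forall b, (forall m, P m -> nle m b) -> nle s b).

Definition is_sup (u : nat -> M) (s : M) : Prop := is_lub (fun m => exists n, m = u n) s.

Record omega_continuous : Prop := {
  nle_antisym : forall a b, nle a b -> nle b a -> a = b;
  chain_sup : forall u, is_chain u -> exists s, is_sup u s;
  add_cont_l : forall u s a, is_chain u -> is_sup u s ->
      is_sup (fun n => add M (u n) a) (add M s a);
  add_cont_r : forall u s a, is_chain u -> is_sup u s ->
      is_sup (fun n => add M a (u n)) (add M a s);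
  act_cont : forall u s (w : W), is_chain u -> is_sup u s ->
      is_sup (fun n => act M w (u n)) (act M w s)
}.
End Order.

Inductive prog (Var Val A : Type) : Type :=
| Assign : Var -> ((Var -> Val) -> Val) -> prog Var Val A
| Seq : prog Var Val A -> prog Var Val A -> prog Var Val A
| Ite : ((Var -> Val) -> bool) -> prog Var Val A -> prog Var Val A -> prog Var Val A
| Choice : prog Var Val A -> prog Var Val A -> prog Var Val A
| Weight : A -> prog Var Val A
| While : ((Var -> Val) -> bool) -> prog Var Val A -> prog Var Val A.

Inductive conf (Var Val A : Type) : Type :=
| Cfg : prog Var Val A -> (Var -> Val) -> conf Var Val A
| Term : (Var -> Val) -> conf Var Val A.

Arguments Assign {Var Val A}. Arguments Seq {Var Val A}. Arguments Ite {Var Val A}.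
Arguments Choice {Var Val A}. Arguments Weight {Var Val A}. Arguments While {Var Val A}.
Arguments Cfg {Var Val A}. Arguments Term {Var Val A}.

Section Semantics.
Variables (Var Val : Type) (Var_dec : forall x y : Var, {x = y} + {x <> y}).
Variables (W : Monoid) (M : LModule W).

Notation state := (Var -> Val).
Notation Prog := (prog Var Val W).
Notation Conf := (conf Var Val W).

Definition upd (s : state) (x : Var) (v : Val) : state :=
  fun y => if Var_dec y x then v else s y.

Definition wle (f g : state -> M) : Prop := forall s, @nle W M (f s) (g s).

(* least fixed point of Phi w.r.t. the pointwise natural order
   (chosen by Hilbert's epsilon; it exists for omega-continuous M) *)
Definition lfp (Phi : (state -> M) -> (state -> M)) : state -> M :=
  epsilon (inhabits (fun _ : state => zero M))
    (fun X => Phi X = X /\ forall Y, Phi Y = Y -> wle X Y).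

Definition guard (b : bool) (a : M) : M := if b then a else zero M.

Fixpoint wp (C : Prog) : (state -> M) -> (state -> M) :=
  match C with
  | Assign x E => fun f s => f (upd s x (E s))
  | Seq C1 C2 => fun f => wp C1 (wp C2 f)
  | Ite phi C1 C2 => fun f s =>
      add M (guard (phi s) (wp C1 f s)) (guard (negb (phi s)) (wp C2 f s))
  | Choice C1 C2 => fun f s => add M (wp C1 f s) (wp C2 f s)
  | Weight a => fun f s => act M a (f s)
  | While phi C' => fun f =>
      lfp (fun X s => add M (guard (negb (phi s)) (f s)) (guard (phi s) (wp C' X s)))
  end.

(* ----- operational semantics: list of outgoing weighted transitions
   (with multiplicity: the two branches of a choice are distinct entries) ----- *)
Fixpoint succs (C : Prog) (s : state) : list (W * Conf) :=
  match C with
  | Assign x E => [(munit W, Term (upd s x (E s)))]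
  | Weight a => [(a, Term s)]
  | Choice C1 C2 => [(munit W, Cfg C1 s); (munit W, Cfg C2 s)]
  | Ite phi C1 C2 => if phi s then [(munit W, Cfg C1 s)] else [(munit W, Cfg C2 s)]
  | While phi C' => if phi s then [(munit W, Cfg (Seq C' (While phi C')) s)]
                    else [(munit W, Term s)]
  | Seq C1 C2 =>
      map (fun p => (fst p, match snd p with
                            | Cfg C1' s' => Cfg (Seq C1' C2) s'
                            | Term s' => Cfg C2 s'
                            end)) (succs C1 s)
  end.

Definition conf_succs (c : Conf) : list (W * Conf) :=
  match c with Cfg C s => succs C s | Term _ => [] end.

(* A computation path from c is identified by the sequence of indices of the
   transitions taken; run returns the list of transition weights and the
   final configuration, or None if the sequence is not a valid path. *)
Fixpoint run (c : Conf) (ns : list nat) : option (list W * Conf) :=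
  match ns with
  | [] => Some ([], c)
  | n :: ns' =>
      match nth_error (conf_succs c) n with
      | None => None
      | Some (w, c') =>
          match run c' ns' with
          | None => None
          | Some (ws, c'') => Some (w :: ws, c'')
          end
      end
  end.

Definition wgt (ws : list W) : W := fold_right (mop W) (munit W) ws.

Definition TPath (C : Prog) (s : state) (p : list nat) : Prop :=
  exists ws t, run (Cfg C s) p = Some (ws, Term t).

Definition path_term (C : Prog) (s : state) (f : state -> M) (p : list nat) : M :=
  match run (Cfg C s) p with
  | Some (ws, Term t) => act M (wgt ws) (f t)
  | _ => zero M
  end.

Definition msum (l : list M) : M := fold_right (add M) (zero M) l.

Definition finite_partial_sum (C : Prog) (s : state) (f : state -> M) (m : M) : Prop :=
  exists l : list (list nat),
    NoDup l /\ Forall (TPath C s) l /\ m = msum (map (path_term C s f) l).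

(* the countable sum over TPaths(<C,s>): supremum of its finite partial sums *)
Definition is_path_sum (C : Prog) (s : state) (f : state -> M) (m : M) : Prop :=
  @is_lub W M (finite_partial_sum C s f) m.

End Semantics.

(* Both sides are suprema of the step-bounded sums [opsem n]: the sum of
   wgt(π) ⊗ f(last π) over the terminating paths of length at most n.
   Every finite set of terminating paths has bounded length, so the path sum
   is the supremum of the [opsem n].  Conversely, by induction on the program,
   wp is the supremum of the [opsem n]: the step-bounded sums unfold along the
   first transition, are monotone and ω-continuous in the postweighting, and
   compose sequentially up to a shift of the step bound; for a loop, the
   supremum is then a fixed point of the characteristic function lying below
   every other fixed point, i.e. its least fixed point. *)
From Stdlib Require Import List Lia ClassicalEpsilon FunctionalExtensionality Permutation.
Import ListNotations.
Set Implicit Arguments.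

Lemma NoDup_flat_map A B (F : A -> list B) (l : list A) :
  NoDup l -> (forall x, In x l -> NoDup (F x)) ->
  (forall x y p, In x l -> In y l -> In p (F x) -> In p (F y) -> x = y) ->
  NoDup (flat_map F l).
Proof.
  induction l as [|a l IHl]; simpl; intros Hl HF Hdisj; [constructor|].
  inversion Hl; subst. apply NoDup_app; auto.
  - apply IHl; auto. intros; eapply Hdisj; eauto.
  - intros p Hp Hp'. apply in_flat_map in Hp'. destruct Hp' as [y [Hy Hpy]].
    assert (a = y) by (eapply Hdisj; eauto). subst. contradiction.
Qed.

Lemma NoDup_incl_Permutation_app A (l L : list A) :
  NoDup l -> incl l L -> exists L', Permutation L (l ++ L').
Proof.
  revert L. induction l as [|a l IHl]; intros L Hl Hincl.
  - exists L. reflexivity.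
  - inversion Hl; subst.
    destruct (in_split a L) as [L1 [L2 ->]]; [apply Hincl; simpl; auto|].
    destruct (IHl (L1 ++ L2)) as [L' HL']; auto.
    { intros x Hx. assert (HxL : In x (L1 ++ a :: L2)) by (apply Hincl; simpl; auto).
      apply in_app_or in HxL. apply in_or_app.
      destruct HxL as [?|[<-|?]]; auto; contradiction. }
    exists L'. simpl. rewrite <- Permutation_middle. constructor. exact HL'.
Qed.

Section NaturalOrder.
Variables (W : Monoid) (M : LModule W).

Notation le := (@nle W M).
Notation is_sup := (@is_sup W M).

Lemma add_zero_r (a : M) : add M a (zero M) = a.
Proof. rewrite add_comm. apply add_zero_l. Qed.

Lemma nle_refl a : le a a.
Proof. exists (zero M). apply add_zero_r. Qed.

Lemma nle_trans a b c : le a b -> le b c -> le a c.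
Proof. intros [x <-] [y <-]. exists (add M x y). symmetry. apply add_assoc. Qed.

Lemma nle_zero_l a : le (zero M) a.
Proof. exists a. apply add_zero_l. Qed.

Lemma nle_add a b c d : le a b -> le c d -> le (add M a c) (add M b d).
Proof.
  intros [x <-] [y <-]. exists (add M x y).
  rewrite !add_assoc. f_equal. rewrite <- !add_assoc. f_equal. apply add_comm.
Qed.

Lemma nle_act w a b : le a b -> le (act M w a) (act M w b).
Proof. intros [x <-]. exists (act M w x). symmetry. apply act_add. Qed.

Lemma is_chain_mono u : is_chain M u -> forall n m, n <= m -> le (u n) (u m).
Proof.
  intros Hu n m Hnm. induction Hnm; [apply nle_refl|].
  eapply nle_trans; [exact IHHnm|apply Hu].
Qed.

Lemma is_sup_ub u a n : is_sup u a -> le (u n) a.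
Proof. intros [Hub _]. apply Hub. eauto. Qed.

Lemma is_sup_least u a b : is_sup u a -> (forall n, le (u n) b) -> le a b.
Proof. intros [_ Hleast] Hb. apply Hleast. intros m [n ->]. apply Hb. Qed.

Lemma is_supI u a :
  (forall n, le (u n) a) -> (forall b, (forall n, le (u n) b) -> le a b) -> is_sup u a.
Proof.
  intros Hub Hleast. split.
  - intros m [n ->]. apply Hub.
  - intros b Hb. apply Hleast. intro n. apply Hb. eauto.
Qed.

Lemma is_sup_ext u v a : (forall n, u n = v n) -> is_sup u a -> is_sup v a.
Proof.
  intros Huv Ha. apply is_supI.
  - intro n. rewrite <- Huv. apply (is_sup_ub n Ha).
  - intros b Hb. apply (is_sup_least Ha). intro n. rewrite Huv. apply Hb.
Qed.

Lemma is_sup_const a : is_sup (fun _ => a) a.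
Proof. apply is_supI; [intros; apply nle_refl|intros b Hb; apply (Hb 0)]. Qed.

Lemma is_sup_tail u a : le (u 0) (u 1) -> is_sup (fun n => u (S n)) a -> is_sup u a.
Proof.
  intros H01 Ha. apply is_supI.
  - intros [|n]; [eapply nle_trans; [exact H01|]|]; apply (is_sup_ub _ Ha).
  - intros b Hb. apply (is_sup_least Ha). intro n. apply Hb.
Qed.

Lemma msum_mono A (F G : A -> M) (l : list A) :
  (forall x, In x l -> le (F x) (G x)) -> le (msum M (map F l)) (msum M (map G l)).
Proof. induction l; simpl; intros H; [apply nle_refl|apply nle_add; auto]. Qed.

Section Continuity.
Hypothesis HM : omega_continuous M.

Lemma is_sup_unique u a b : is_sup u a -> is_sup u b -> a = b.
Proof.
  intros Ha Hb. apply (nle_antisym HM).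
  - apply (is_sup_least Ha). intro n. apply (is_sup_ub n Hb).
  - apply (is_sup_least Hb). intro n. apply (is_sup_ub n Ha).
Qed.

(* Continuity in each argument separately suffices, by a diagonal argument. *)
Lemma is_sup_add u v a b : is_chain M u -> is_chain M v -> is_sup u a -> is_sup v b ->
  is_sup (fun n => add M (u n) (v n)) (add M a b).
Proof.
  intros Hu Hv Ha Hb. apply is_supI.
  - intro n. apply nle_add; apply is_sup_ub; assumption.
  - intros c Hc. apply (is_sup_least (add_cont_r HM a Hv Hb)). intro m.
    apply (is_sup_least (add_cont_l HM (v m) Hu Ha)). intro n.
    eapply nle_trans; [|apply (Hc (Nat.max n m))].
    apply nle_add; apply is_chain_mono; auto; lia.
Qed.

Lemma is_sup_msum A (F : A -> nat -> M) (G : A -> M) (l : list A) :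
  (forall x, In x l -> is_chain M (F x) /\ is_sup (F x) (G x)) ->
  is_sup (fun n => msum M (map (fun x => F x n) l)) (msum M (map G l)).
Proof.
  induction l as [|a l IHl]; simpl; intros HF; [apply is_sup_const|].
  apply is_sup_add; [apply HF; auto| |apply HF; auto|apply IHl; auto].
  intro n. apply msum_mono. intros x Hx. apply HF; simpl; auto.
Qed.

End Continuity.

Lemma msum_app l1 l2 : msum M (l1 ++ l2) = add M (msum M l1) (msum M l2).
Proof.
  induction l1 as [|a l1 IHl1]; simpl; [now rewrite add_zero_l|].
  now rewrite IHl1, add_assoc.
Qed.

Lemma msum_perm l1 l2 : Permutation l1 l2 -> msum M l1 = msum M l2.
Proof.
  induction 1; simpl; try congruence.
  rewrite <- !add_assoc. f_equal. apply add_comm.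
Qed.

Lemma act_msum w l : act M w (msum M l) = msum M (map (act M w) l).
Proof. induction l; simpl; [apply act_zero|now rewrite act_add, IHl]. Qed.

Lemma msum_flat_map A B (h : B -> M) (F : A -> list B) (l : list A) :
  msum M (map h (flat_map F l)) = msum M (map (fun x => msum M (map h (F x))) l).
Proof. induction l; simpl; auto. now rewrite map_app, msum_app, IHl. Qed.

Lemma msum_nth_error_seq A (L : list A) (G : A -> M) :
  msum M (map (fun k => match nth_error L k with Some x => G x | None => zero M end)
              (seq 0 (length L)))
  = msum M (map G L).
Proof.
  induction L; simpl; auto. f_equal. rewrite <- seq_shift, map_map. apply IHL.
Qed.

End NaturalOrder.

Section Adequacy.
Variables (W : Monoid) (M : LModule W) (HM : omega_continuous M).
Variables (Var Val : Type) (Var_dec : forall x y : Var, {x = y} + {x <> y}).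

Notation state := (Var -> Val).
Notation Prog := (prog Var Val W).
Notation Conf := (conf Var Val W).
Notation le := (@nle W M).
Notation is_sup := (@is_sup W M).
Notation succs := (succs Var_dec W).
Notation wp := (wp Var_dec M).

Fixpoint opsem (n : nat) (c : Conf) (f : state -> M) : M :=
  match c, n with
  | Term t, _ => f t
  | Cfg _ _, 0 => zero M
  | Cfg C s, S n' =>
      msum M (map (fun p => act M (fst p) (opsem n' (snd p) f)) (succs C s))
  end.

Lemma opsem_Term n t f : opsem n (Term t) f = f t.
Proof. destruct n; reflexivity. Qed.

Lemma opsem_S_unit n C s c f :
  succs C s = [(munit W, c)] -> opsem (S n) (Cfg C s) f = opsem n c f.
Proof. intro Hs. simpl. rewrite Hs. simpl. now rewrite act_unit, add_zero_r. Qed.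

Lemma opsem_mono_f n c f g : (forall t, le (f t) (g t)) -> le (opsem n c f) (opsem n c g).
Proof.
  revert c. induction n; intros [C s|t] Hfg; simpl; auto using nle_refl.
  apply msum_mono. intros. apply nle_act. auto.
Qed.

Lemma opsem_chain c f : is_chain M (fun n => opsem n c f).
Proof.
  intro n. revert c. induction n; intros [C s|t]; simpl; auto using nle_refl, nle_zero_l.
  apply msum_mono. intros. apply nle_act. auto.
Qed.

Lemma opsem_mono_n n m c f : n <= m -> le (opsem n c f) (opsem m c f).
Proof. apply (is_chain_mono (opsem_chain c f)). Qed.

Lemma is_sup_opsem_S c f a :
  is_sup (fun n => opsem (S n) c f) a -> is_sup (fun n => opsem n c f) a.
Proof. apply (@is_sup_tail W M (fun n => opsem n c f)), opsem_chain. Qed.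

Lemma opsem_cont n c (g : nat -> state -> M) h :
  (forall t, is_chain M (fun m => g m t)) -> (forall t, is_sup (fun m => g m t) (h t)) ->
  is_sup (fun m => opsem n c (g m)) (opsem n c h).
Proof.
  intros Hchain Hsup. revert c.
  induction n; intros [C s|t]; simpl; auto using is_sup_const.
  apply is_sup_msum with (F := fun p m => act M (fst p) (opsem n (snd p) (g m)));
    [exact HM|].
  intros p _.
  assert (Hc : is_chain M (fun m => opsem n (snd p) (g m))).
  { intro m. apply opsem_mono_f. intro t. apply Hchain. }
  split; [intro m; apply nle_act, Hc|apply (act_cont HM _ Hc), IHn].
Qed.

Lemma opsem_Seq_le n D E s f :
  le (opsem n (Cfg (Seq D E) s) f) (opsem n (Cfg D s) (fun t => opsem n (Cfg E t) f)).
Proof.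
  revert D s. induction n; intros D s; [apply nle_zero_l|].
  simpl. rewrite map_map. apply msum_mono. intros [w [D' s'|s']] _; simpl; apply nle_act.
  - eapply nle_trans; [apply IHn|]. apply opsem_mono_f. intro t. apply opsem_chain.
  - rewrite opsem_Term. apply opsem_chain.
Qed.

Lemma opsem_Seq_ge n m D E s f :
  le (opsem n (Cfg D s) (fun t => opsem m (Cfg E t) f)) (opsem (n + m) (Cfg (Seq D E) s) f).
Proof.
  revert D s. induction n; intros D s; [apply nle_zero_l|].
  simpl. rewrite map_map. apply msum_mono. intros [w [D' s'|s']] _; simpl; apply nle_act.
  - apply IHn.
  - rewrite opsem_Term. apply opsem_mono_n. lia.
Qed.

Lemma is_sup_opsem_Seq D E s f g :
  (forall t h, is_sup (fun n => opsem n (Cfg D t) h) (wp D h t)) ->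
  (forall t, is_sup (fun m => opsem m (Cfg E t) f) (g t)) ->
  is_sup (fun n => opsem n (Cfg (Seq D E) s) f) (wp D g s).
Proof.
  intros HD HE. apply is_supI.
  - intro n. eapply nle_trans; [apply opsem_Seq_le|]. eapply nle_trans.
    + apply opsem_mono_f. intro t. apply (is_sup_ub n (HE t)).
    + apply (is_sup_ub n (HD s g)).
  - intros b Hb. apply (is_sup_least (HD s g)). intro n.
    apply (is_sup_least
      (@opsem_cont n (Cfg D s) (fun m t => opsem m (Cfg E t) f) g
         (fun t => opsem_chain (Cfg E t) f) HE)).
    intro m. eapply nle_trans; [apply opsem_Seq_ge|apply Hb].
Qed.

Lemma lfp_eq (Phi : (state -> M) -> state -> M) V :
  Phi V = V -> (forall Y, Phi Y = Y -> wle M V Y) -> lfp M Phi = V.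
Proof.
  intros Hfix Hleast.
  assert (Hlfp : Phi (lfp M Phi) = lfp M Phi /\ forall Y, Phi Y = Y -> wle M (lfp M Phi) Y).
  { unfold lfp. apply epsilon_spec. eauto. }
  apply functional_extensionality. intro s.
  apply (nle_antisym HM); [apply (proj2 Hlfp V Hfix)|apply Hleast, Hlfp].
Qed.

Section Loop.
Variables (phi : state -> bool) (B : Prog) (f : state -> M).
Hypothesis HB : forall t h, is_sup (fun n => opsem n (Cfg B t) h) (wp B h t).

Definition loop_step (X : state -> M) (s : state) : M :=
  add M (guard M (negb (phi s)) (f s)) (guard M (phi s) (wp B X s)).

Lemma opsem_While_fixpoint V :
  (forall s, is_sup (fun n => opsem n (Cfg (While phi B) s) f) (V s)) -> loop_step V = V.
Proof.
  intro HV. apply functional_extensionality. intro s.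
  symmetry. apply (is_sup_unique HM (HV s)). apply is_sup_opsem_S.
  unfold loop_step. destruct (phi s) eqn:Hphi; cbn [negb guard].
  - rewrite add_zero_l. eapply is_sup_ext; [|apply is_sup_opsem_Seq; eauto].
    intro n. symmetry. apply opsem_S_unit. simpl. now rewrite Hphi.
  - rewrite add_zero_r. eapply is_sup_ext; [|apply is_sup_const].
    intro n. rewrite (@opsem_S_unit _ _ _ (Term s)), opsem_Term; [reflexivity|].
    simpl. now rewrite Hphi.
Qed.

Lemma opsem_While_le_fixpoint Y :
  loop_step Y = Y -> forall n s, le (opsem n (Cfg (While phi B) s) f) (Y s).
Proof.
  intros HY n. induction n; intro s; [apply nle_zero_l|].
  rewrite <- HY. unfold loop_step. destruct (phi s) eqn:Hphi; cbn [negb guard].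
  - rewrite (@opsem_S_unit _ _ _ (Cfg (Seq B (While phi B)) s)) by (simpl; now rewrite Hphi).
    rewrite add_zero_l. eapply nle_trans; [apply opsem_Seq_le|].
    eapply nle_trans; [apply opsem_mono_f, IHn|apply (is_sup_ub n (HB s Y))].
  - rewrite (@opsem_S_unit _ _ _ (Term s)) by (simpl; now rewrite Hphi).
    rewrite opsem_Term, add_zero_r. apply nle_refl.
Qed.

Lemma is_sup_opsem_While s :
  is_sup (fun n => opsem n (Cfg (While phi B) s) f) (lfp M loop_step s).
Proof.
  destruct (choice _ (fun t => chain_sup HM (opsem_chain (Cfg (While phi B) t) f)))
    as [V HV].
  rewrite (@lfp_eq loop_step V (opsem_While_fixpoint V HV)); [apply HV|].
  intros Y HY t. apply (is_sup_least (HV t)). intro n. apply opsem_While_le_fixpoint, HY.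
Qed.

End Loop.

Theorem is_sup_opsem_wp C s f : is_sup (fun n => opsem n (Cfg C s) f) (wp C f s).
Proof.
  revert s f.
  induction C as [x E|C1 IH1 C2 IH2|phi C1 IH1 C2 IH2|C1 IH1 C2 IH2|a|phi B IH];
    intros s f; simpl.
  - apply is_sup_opsem_S. eapply is_sup_ext; [|apply is_sup_const].
    intro n. now rewrite (@opsem_S_unit _ _ _ (Term (upd Var_dec s x (E s)))), opsem_Term.
  - apply is_sup_opsem_Seq; auto.
  - apply is_sup_opsem_S. destruct (phi s) eqn:Hphi; cbn [negb guard];
      [rewrite add_zero_r|rewrite add_zero_l]; eapply is_sup_ext; eauto;
      intro n; symmetry; apply opsem_S_unit; simpl; now rewrite Hphi.
  - apply is_sup_opsem_S.
    eapply is_sup_ext;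
      [|exact (is_sup_add HM (opsem_chain _ f) (opsem_chain _ f) (IH1 s f) (IH2 s f))].
    intro n. simpl. now rewrite !act_unit, add_zero_r.
  - apply is_sup_opsem_S. eapply is_sup_ext; [|apply is_sup_const].
    intro n. simpl. rewrite add_zero_r, opsem_Term. reflexivity.
  - apply is_sup_opsem_While, IH.
Qed.

Definition conf_path_term (c : Conf) (f : state -> M) (p : list nat) : M :=
  match run Var_dec W c p with
  | Some (ws, Term t) => act M (wgt W ws) (f t)
  | _ => zero M
  end.

Fixpoint tpaths (n : nat) (c : Conf) : list (list nat) :=
  match c, n with
  | Term _, _ => [[]]
  | Cfg _ _, 0 => []
  | Cfg C s, S n' =>
      flat_map (fun k => match nth_error (succs C s) k with
                         | Some p => map (cons k) (tpaths n' (snd p))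
                         | None => []
                         end)
               (seq 0 (length (succs C s)))
  end.

Lemma conf_path_term_cons C s f k p w c :
  nth_error (succs C s) k = Some (w, c) ->
  conf_path_term (Cfg C s) f (k :: p) = act M w (conf_path_term c f p).
Proof.
  intro Hk. unfold conf_path_term. simpl. rewrite Hk.
  destruct (run Var_dec W c p) as [[ws [C' s'|t]]|]; simpl.
  - symmetry. apply act_zero.
  - apply act_mul.
  - symmetry. apply act_zero.
Qed.

Lemma opsem_tpaths n c f : opsem n c f = msum M (map (conf_path_term c f) (tpaths n c)).
Proof.
  revert c. induction n; intros [C s|t]; try reflexivity;
    try (simpl; unfold conf_path_term; simpl; now rewrite act_unit, add_zero_r).
  simpl. rewrite msum_flat_map, <- msum_nth_error_seq. f_equal. apply map_ext. intro k.
  destruct (nth_error (succs C s) k) as [[w c]|] eqn:Hk; [|reflexivity].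
  rewrite map_map. erewrite map_ext by (intro p; exact (conf_path_term_cons C s f k p Hk)).
  simpl. rewrite IHn, act_msum, map_map. reflexivity.
Qed.

Lemma tpaths_terminating n c p :
  In p (tpaths n c) -> exists ws t, run Var_dec W c p = Some (ws, Term t).
Proof.
  revert c p. induction n; intros [C s|t] p Hp; simpl in Hp;
    try (destruct Hp as [<-|[]]; simpl; eauto); [contradiction|].
  apply in_flat_map in Hp. destruct Hp as [k [_ Hk]].
  destruct (nth_error (succs C s) k) as [[w c]|] eqn:Ek; [|contradiction].
  apply in_map_iff in Hk. destruct Hk as [p' [<- Hp']].
  destruct (IHn _ _ Hp') as [ws [t Ht]]. simpl in Ht |- *. rewrite Ek, Ht. eauto.
Qed.

Lemma tpaths_NoDup n c : NoDup (tpaths n c).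
Proof.
  revert c. induction n; intros [C s|t]; simpl; try (repeat constructor; intros []).
  apply NoDup_flat_map; [apply seq_NoDup| |].
  - intros k _. destruct nth_error; [|constructor].
    apply FinFun.Injective_map_NoDup; auto. intros q q' E. now injection E.
  - intros k l p _ _ Hk Hl.
    destruct (nth_error _ k); [|contradiction]. destruct (nth_error _ l); [|contradiction].
    apply in_map_iff in Hk, Hl. destruct Hk as [? [<- _]]. destruct Hl as [? [E _]].
    now injection E.
Qed.

Lemma tpaths_complete p n c ws t :
  run Var_dec W c p = Some (ws, Term t) -> length p <= n -> In p (tpaths n c).
Proof.
  revert n c ws. induction p as [|k p IHp]; intros n c ws Hrun Hlen.
  - injection Hrun as _ ->. destruct n; simpl; auto.
  - destruct c as [C s|t']; simpl in Hrun; [|destruct k; discriminate].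
    destruct n as [|n]; [simpl in Hlen; lia|].
    destruct (nth_error (succs C s) k) as [[w c]|] eqn:Ek; [|discriminate].
    destruct (run Var_dec W c p) as [[ws' c']|] eqn:Er; [|discriminate].
    injection Hrun as _ ->.
    simpl. apply in_flat_map. exists k. split.
    + apply in_seq. split; [lia|]. simpl. apply nth_error_Some. congruence.
    + rewrite Ek. apply in_map. eapply IHp; eauto. simpl in Hlen. lia.
Qed.

Lemma is_path_sum_of_opsem C s f a :
  is_sup (fun n => opsem n (Cfg C s) f) a -> is_path_sum Var_dec M C s f a.
Proof.
  intro Ha. split.
  - intros x [l [Hnd [Hterm ->]]].
    set (n := list_max (map (@length nat) l)).
    assert (Hincl : incl l (tpaths n (Cfg C s))).
    { intros p Hp. rewrite Forall_forall in Hterm. destruct (Hterm p Hp) as [ws [t Ht]].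
      eapply tpaths_complete; [exact Ht|].
      assert (Hmax : Forall (fun k => k <= n) (map (@length nat) l))
        by apply list_max_le, le_n.
      rewrite Forall_forall in Hmax. apply Hmax, in_map, Hp. }
    destruct (NoDup_incl_Permutation_app Hnd Hincl) as [L HL].
    eapply nle_trans; [|apply (is_sup_ub n Ha)].
    rewrite opsem_tpaths, (msum_perm M (Permutation_map _ HL)), map_app, msum_app.
    eexists. reflexivity.
  - intros b Hb. apply (is_sup_least Ha). intro n. apply Hb. exists (tpaths n (Cfg C s)).
    split; [apply tpaths_NoDup|split; [|apply opsem_tpaths]].
    rewrite Forall_forall. intros p Hp. exact (tpaths_terminating _ _ _ Hp).
Qed.

End Adequacy.

Theorem mainTheorem3 (W : Monoid) (M : LModule W) (HM : omega_continuous M)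
  (Var Val : Type) (Var_dec : forall x y : Var, {x = y} + {x <> y})
  (C : prog Var Val W) (s : Var -> Val) (f : (Var -> Val) -> M) :
  is_path_sum Var_dec M C s f (wp Var_dec M C f s).
Proof.
  apply is_path_sum_of_opsem, is_sup_opsem_wp. exact HM.
Qed.
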